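(* Let $n\ge1$ and let $\lambda,\lambda_1,\dots,\lambda_{n+1}$ be real numbers with $|\lambda|<|\lambda_1|\le|\lambda_2|\le\cdots\le|\lambda_{n+1}|$. Then there exist no matrix $\mathbf U\in U(n,1)$ and complex number $c$ such that $\mathbf U\cdot\mathrm{diag}(\lambda,\lambda_2,\dots,\lambda_{n+1})\cdot\mathbf U^t=c\cdot\mathrm{diag}(\lambda_1,\lambda_2,\dots,\lambda_{n+1})$.
   Context: $U(n,1)$ denotes the group of $(n+1)\times(n+1)$ complex matrices $\mathbf U$ with $\mathbf U J\overline{\mathbf U}^t=J$, where $J=\mathrm{diag}(1,\dots,1,-1)$; $\mathbf U^t$ is the transpose. *)

(* Complex numbers are modelled by an arbitrary
   numClosedFieldType C (algebraically closed field with conjugation z^*,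
   e.g. algC or the complex numbers); "real" means z \is Num.real. *)
From HB Require Import structures.
From mathcomp Require Import all_boot all_order all_algebra.
Set Implicit Arguments. Unset Strict Implicit. Unset Printing Implicit Defensive.
Import Order.TTheory GRing.Theory Num.Theory.
Local Open Scope ring_scope.

Definition Jmat (C : numClosedFieldType) (n : nat) : 'M[C]_(n.+1) :=
  diag_mx (\row_(i < n.+1) (if i == ord_max then -1 else 1)).

Definition in_Un1 (C : numClosedFieldType) (n : nat) (U : 'M[C]_(n.+1)) : Prop :=
  U *m Jmat C n *m (map_mx (fun z : C => z^*) U)^T = Jmat C n.

(* If U in U(n,1) and U D1 U^T = c D2 with D1, D2 real diagonal, then conjugating gives
   conj(U) D1 conj(U)^T = conj(c) D2, and U^T J conj(U) = J glues the two identities into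
   U (D1 J D1 - t J) conj(U)^T = |c|^2 D2 J D2 - t J.  The pencil D J D - t J is singular
   exactly when t is a squared diagonal entry of D, so every squared entry of D1 equals
   |c|^2 times a squared entry of D2.  Applied to lambda^2 this forces |c|^2 < 1, and
   applied to lambda_{n+1}^2, the entry of largest modulus, it forces |c|^2 >= 1. *)
From HB Require Import structures.
From mathcomp Require Import all_boot all_order all_algebra.
From mathcomp Require Import ring.
Set Implicit Arguments. Unset Strict Implicit. Unset Printing Implicit Defensive.
Import Order.TTheory GRing.Theory Num.Theory.
Local Open Scope ring_scope.

Lemma sqr_contraction_lt1 (R : numDomainType) (s p a : R) :
  0 <= p -> p < a -> s * a ^+ 2 = p ^+ 2 -> s < 1.
Proof.
move=> p_ge0 lt_pa sa2E; have a_gt0 := le_lt_trans p_ge0 lt_pa.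
rewrite -(gtr_pMl s (exprn_gt0 2 a_gt0)) sa2E !expr2.
exact: ltr_pM.
Qed.

Lemma sqr_contraction_eq0 (R : numDomainType) (s b m : R) :
  0 <= s -> s < 1 -> 0 <= b -> b <= m -> s * b ^+ 2 = m ^+ 2 -> m = 0.
Proof.
move=> s_ge0 s_lt1 b_ge0 le_bm sb2E; have [//|m_neq0] := eqVneq m 0.
have m_gt0 : 0 < m by rewrite lt_def m_neq0 (le_trans b_ge0 le_bm).
have le_sb2_sm2 : s * b ^+ 2 <= s * m ^+ 2.
  by apply: ler_wpM2l => //; rewrite !expr2; apply: ler_pM.
have lt_sm2_m2 : s * m ^+ 2 < m ^+ 2 by rewrite gtr_pMl // exprn_gt0.
by have := le_lt_trans le_sb2_sm2 lt_sm2_m2; rewrite sb2E ltxx.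
Qed.

Section PseudoUnitaryCongruence.
Variables (C : numClosedFieldType) (n : nat).

Local Notation J := (Jmat C n).
Local Notation conjmx A := (map_mx (fun z : C => z^*) A).
Local Notation diag d := (diag_mx (\row_i d i)).

Lemma conjmx_diag_real (d : 'I_n.+1 -> C) :
  (forall i, d i \is Num.real) -> conjmx (diag d) = diag d.
Proof.
move=> d_real; apply/matrixP=> i j; rewrite !mxE rmorphMn.
by congr (_ *+ _); apply: conj_Creal.
Qed.

Lemma conjmx_Jmat : conjmx J = J.
Proof. by apply: conjmx_diag_real => i; case: ifP; rewrite ?realN real1. Qed.

Lemma mulmx_Jmat : J *m J = 1%:M.
Proof.
rewrite /Jmat mulmx_diag; apply/matrixP=> i j; rewrite !mxE.
by case: ifP; rewrite ?mulrNN mulr1.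
Qed.

Lemma det_Jmat_neq0 : \det J != 0.
Proof.
apply/eqP => detJ0; have := congr1 determinant mulmx_Jmat.
by rewrite det_mulmx detJ0 mul0r det1 => /esym/eqP; rewrite oner_eq0.
Qed.

Lemma Un1_trmx (U : 'M[C]_n.+1) : in_Un1 U -> U^T *m J *m conjmx U = J.
Proof.
move=> U_Un1; set V := conjmx U.
have VTJU : V^T *m J *m U = J.
  have /mulmx1C UVJ_1 : U *m (J *m V^T *m J) = 1%:M.
    by rewrite !mulmxA U_Un1 mulmx_Jmat.
  have : J *m (J *m V^T *m J *m U) = J by rewrite UVJ_1 mulmx1.
  by rewrite !mulmxA mulmx_Jmat mul1mx.
have conjVE : conjmx V = U by apply/matrixP=> i j; rewrite !mxE conjCK.
have := congr1 (map_mx (fun z : C => z^*)) VTJU.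
by rewrite !map_mxM conjmx_Jmat -map_trmx conjVE.
Qed.

Lemma Jpencil_diagE (s t : C) (d : 'I_n.+1 -> C) :
  s *: (diag d *m J *m diag d) - t *: J = J *m diag (fun i => s * d i ^+ 2 - t).
Proof.
rewrite /Jmat !mulmx_diag; apply/matrixP=> i j; rewrite !mxE.
case: (i == j); rewrite ?mulr0n ?mulr1n ?mulr0 ?subrr //.
by case: ifP => _; ring.
Qed.

Lemma det_Jpencil_eq0 (s t : C) (d : 'I_n.+1 -> C) :
  (\det (s *: (diag d *m J *m diag d) - t *: J) == 0) = [exists i, s * d i ^+ 2 == t].
Proof.
rewrite Jpencil_diagE det_mulmx mulf_eq0 (negbTE det_Jmat_neq0) det_diag /=.
under eq_bigr do rewrite mxE.
apply/prodf_eq0/existsP => [[i _]|[i si_t]]; last by exists i; rewrite ?subr_eq0.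
by rewrite subr_eq0; exists i.
Qed.

Lemma Un1_diag_congr_sqr (U : 'M[C]_n.+1) (c : C) (d1 d2 : 'I_n.+1 -> C) :
  (forall i, d1 i \is Num.real) -> (forall i, d2 i \is Num.real) -> in_Un1 U ->
  U *m diag d1 *m U^T = c *: diag d2 ->
  forall i, exists j, c * c^* * d2 j ^+ 2 = d1 i ^+ 2.
Proof.
move=> d1_real d2_real U_Un1 congrE i; set V := conjmx U.
have congrE' : V *m diag d1 *m V^T = c^* *: diag d2.
  have := congr1 (map_mx (fun z : C => z^*)) congrE.
  by rewrite !map_mxM map_mxZ !conjmx_diag_real // -map_trmx.
have sqrE : U *m (diag d1 *m J *m diag d1) *m V^T
             = (c * c^*) *: (diag d2 *m J *m diag d2).
  have : (U *m diag d1 *m U^T) *m J *m (V *m diag d1 *m V^T)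
         = (c *: diag d2) *m J *m (c^* *: diag d2) by rewrite congrE congrE'.
  rewrite -!scalemxAl -!scalemxAr scalerA => <-.
  by rewrite -{1}(Un1_trmx U_Un1) !mulmxA.
have pencilE t : U *m (1 *: (diag d1 *m J *m diag d1) - t *: J) *m V^T
                 = (c * c^*) *: (diag d2 *m J *m diag d2) - t *: J.
  by rewrite scale1r mulmxBr mulmxBl sqrE -scalemxAr -scalemxAl U_Un1.
have /eqP := congr1 determinant (pencilE (d1 i ^+ 2)); rewrite !det_mulmx.
have /eqP -> : \det (1 *: (diag d1 *m J *m diag d1) - d1 i ^+ 2 *: J) == 0.
  by rewrite det_Jpencil_eq0; apply/existsP; exists i; rewrite mul1r.
by rewrite mulr0 mul0r eq_sym det_Jpencil_eq0 => /existsP[j /eqP]; exists j.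
Qed.

End PseudoUnitaryCongruence.

Theorem mainTheorem7 (C : numClosedFieldType) (n : nat) (hn : (1 <= n)%N)
  (lam : C) (l : 'I_n.+1 -> C)
  (hlam : lam \is Num.real) (hl : forall i, l i \is Num.real)
  (hlt : `|lam| < `|l ord0|)
  (hmono : forall i j : 'I_n.+1, (i <= j)%N -> `|l i| <= `|l j|) :
  ~ exists (U : 'M[C]_(n.+1)) (c : C),
      in_Un1 U /\
      U *m diag_mx (\row_i (if i == ord0 then lam else l i)) *m U^T
        = c *: diag_mx (\row_i l i).
Proof.
move=> [U [c [U_Un1 congrE]]].
have d1_real i : (if i == ord0 then lam else l i) \is Num.real by case: ifP.
have sqr_in := Un1_diag_congr_sqr d1_real hl U_Un1 congrE.
have max_neq0 : (ord_max : 'I_n.+1) != ord0 by rewrite -val_eqE /= -lt0n.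
have [k lamE] := sqr_in ord0; rewrite eqxx -(real_normK hlam) -(real_normK (hl k)) in lamE.
have [j maxE] := sqr_in ord_max.
rewrite (negbTE max_neq0) -(real_normK (hl ord_max)) -(real_normK (hl j)) in maxE.
have s_lt1 : c * c^* < 1.
  by apply: sqr_contraction_lt1 lamE => //; exact: lt_le_trans hlt (hmono _ _ _).
have lmax0 : `|l ord_max| = 0.
  apply: sqr_contraction_eq0 (mul_conjC_ge0 c) s_lt1 (normr_ge0 _) _ maxE.
  exact: hmono j ord_max (leq_ord j).
have lmax_gt0 : 0 < `|l ord_max|.
  exact: le_lt_trans (normr_ge0 lam) (lt_le_trans hlt (hmono ord0 ord_max (leq0n _))).
by rewrite lmax0 ltxx in lmax_gt0.
Qed.
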